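(* Let $\lambda\in\{1,2\}$ and let $u,t,v,w$ be integers such that: $(uw,t)$ satisfies $S_{\lambda,1}$ and $(uw)\cdot v=t^3+t^{\lambda}+1$ (so $uw,t,v$ are consecutive terms of $\langle uw,t\rangle_{S_{\lambda,1}}=\langle t,v\rangle_{S_{2,\lambda}}$); $(vw,t)$ satisfies $S_{\lambda,1}$ (so $vw,t,u$ are consecutive terms of $\langle vw,t\rangle_{S_{\lambda,1}}=\langle t,u\rangle_{S_{2,\lambda}}$); $|t|$ is a prime; and $t\nmid (u-v)$. Then $(-uv,t)$ satisfies $S_{\lambda,1}$, so $-uv,t,-w$ are, in that order, three consecutive terms of a third 4-chain $\langle -uv,t\rangle_{S_{\lambda,1}}=\langle t,-w\rangle_{S_{2,\lambda}}$.
   Context: For $\lambda_a,\lambda_b\in\{1,2\}$, a pair of integers $(x,y)$ satisfies the system $S_{\lambda_a,\lambda_b}$ if $x\mid y^3+y^{\lambda_a}+1$ and $y\mid x^3+x^{\lambda_b}+1$. For such a pair, $\langle x,y\rangle_{S_{\lambda_a,\lambda_b}}$ denotes the bi-infinite integer sequence $(u_n)$ with $u_0=x$, $u_1=y$ and $u_{n-1}u_{n+1}=u_n^3+u_n^{e_n}+1$ for all $n$, where $e_n$ has period 4 with $(e_0,e_1,e_2,e_3)=(\lambda_b,\lambda_a,3-\lambda_b,3-\lambda_a)$; sequences are identified up to shift and reversal of indices. ''$u,t,s$, in that order, are three consecutive terms of $\langle u,t\rangle_{S_{\lambda_a,\lambda_b}}$'' means $(u,t)$ satisfies $S_{\lambda_a,\lambda_b}$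 and $us=t^3+t^{\lambda_a}+1$. *)

From Stdlib Require Import ZArith Znumtheory.
Open Scope Z_scope.

Definition satS (la lb x y : Z) : Prop :=
  (x | y ^ 3 + y ^ la + 1) /\ (y | x ^ 3 + x ^ lb + 1).

(* "u, t, s, in that order, are three consecutive terms of <u,t>_{S_{la,lb}}":
   (u,t) satisfies S_{la,lb} and u*s = t^3 + t^la + 1. *)
Definition consec3 (la lb u t s : Z) : Prop :=
  satS la lb u t /\ u * s = t ^ 3 + t ^ la + 1.

From Stdlib Require Import ZArith Znumtheory Lia.
Open Scope Z_scope.

(* Modulo the prime t, both uw and vw are roots of X^3 + X + 1, and they are
   distinct since t divides neither w nor u - v.  The third root is then
   -(uw + vw), and Vieta gives (uw)(vw)(-(uw + vw)) = -1.  As (uw)v = t^3 + t^lam + 1,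
   uvw = 1 mod t, so (uw)(vw) = w and the third root is -1/w = -uv. *)

Lemma divide_lincomb (t x y k l : Z) : (t | x) -> (t | y) -> (t | k * x + l * y).
Proof. intros; apply Z.divide_add_r; apply Z.divide_mul_r; assumption. Qed.

Section PrimeModulus.

Variable t : Z.
Hypothesis t_prime : prime (Z.abs t).

Lemma prime_abs_divide_mul (x y : Z) : (t | x * y) -> (t | x) \/ (t | y).
Proof.
  intros Hxy; apply Z.divide_abs_l in Hxy.
  destruct (prime_mult _ t_prime _ _ Hxy); [left | right];
    apply Z.divide_abs_l; assumption.
Qed.

Lemma prime_abs_not_divide_mul (x y : Z) :
  ~ (t | x) -> ~ (t | y) -> ~ (t | x * y).
Proof. intros Hx Hy Hxy; destruct (prime_abs_divide_mul _ _ Hxy); auto. Qed.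

Lemma prime_abs_not_divide_unit_factor (x w : Z) : (t | x * w - 1) -> ~ (t | w).
Proof.
  intros Hxw Hw.
  assert (H1 : (t | 1)).
  { replace 1 with (x * w + (-1) * (x * w - 1)) by ring.
    apply divide_lincomb; assumption. }
  apply Z.divide_abs_l, Z.divide_1_r in H1.
  destruct t_prime; lia.
Qed.

(* (uw)(vw) = w (uvw) = w mod t, so Vieta reads w (uw + vw) = 1 = uvw mod t; cancel w. *)
Lemma vieta_third_root_congr (u v w : Z) :
  (t | u * v * w - 1) -> (t | 1 - u * w * (v * w) * (u * w + v * w)) ->
  (t | - (u * v) - - (u * w + v * w)).
Proof.
  intros Huvw Hvieta.
  assert (H : (t | w * (- (u * v) - - (u * w + v * w)))).
  { replace (w * (- (u * v) - - (u * w + v * w)))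
      with ((- (w ^ 2 * (u + v)) - 1) * (u * v * w - 1)
            + (-1) * (1 - u * w * (v * w) * (u * w + v * w))) by ring.
    apply divide_lincomb; assumption. }
  destruct (prime_abs_divide_mul _ _ H) as [Hw | Hthird]; [| exact Hthird].
  exfalso; exact (prime_abs_not_divide_unit_factor _ _ Huvw Hw).
Qed.

Variables p q : Z.

Let f (x : Z) : Z := x ^ 3 + p * x + q.

Lemma cubic_root_congr (x y : Z) : (t | x - y) -> (t | f y) -> (t | f x).
Proof.
  intros Hxy Hy.
  replace (f x) with (1 * ((x - y) * (x ^ 2 + x * y + y ^ 2 + p)) + 1 * f y)
    by (unfold f; ring).
  apply divide_lincomb; [apply Z.divide_mul_l |]; assumption.
Qed.

Section TwoRoots.

Variables a b : Z.
Hypotheses (root_a : (t | f a)) (root_b : (t | f b)) (distinct_ab : ~ (t | a - b)).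

Lemma cubic_divide_root_quotient : (t | a ^ 2 + a * b + b ^ 2 + p).
Proof.
  assert (H : (t | (a - b) * (a ^ 2 + a * b + b ^ 2 + p))).
  { replace ((a - b) * (a ^ 2 + a * b + b ^ 2 + p)) with (1 * f a + (-1) * f b)
      by (unfold f; ring).
    apply divide_lincomb; assumption. }
  destruct (prime_abs_divide_mul _ _ H); tauto.
Qed.

Lemma cubic_product_roots : (t | q - a * b * (a + b)).
Proof.
  replace (q - a * b * (a + b)) with (1 * f a + (- a) * (a ^ 2 + a * b + b ^ 2 + p))
    by (unfold f; ring).
  apply divide_lincomb; [| apply cubic_divide_root_quotient]; assumption.
Qed.

Lemma cubic_third_root : (t | f (- (a + b))).
Proof.
  replace (f (- (a + b)))
    with (- (a + b) * (a ^ 2 + a * b + b ^ 2 + p) + 1 * (q - a * b * (a + b)))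
    by (unfold f; ring).
  apply divide_lincomb; [apply cubic_divide_root_quotient | apply cubic_product_roots].
Qed.

End TwoRoots.

End PrimeModulus.

Lemma divide_chain_value_pred (lam t : Z) :
  (lam = 1 \/ lam = 2) -> (t | t ^ 3 + t ^ lam + 1 - 1).
Proof.
  intros [-> | ->]; [exists (t ^ 2 + 1) | exists (t ^ 2 + t)]; ring.
Qed.

Theorem theorem13 (lam u t v w : Z) :
  (lam = 1 \/ lam = 2) ->
  satS lam 1 (u * w) t ->
  (u * w) * v = t ^ 3 + t ^ lam + 1 ->
  satS lam 1 (v * w) t ->
  prime (Z.abs t) ->
  ~ (t | u - v) ->
  satS lam 1 (- (u * v)) t /\ consec3 lam 1 (- (u * v)) t (- w).
Proof.
  intros Hlam [_ root_uw] Hchain [_ root_vw] Ht Huv.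
  rewrite Z.pow_1_r in root_uw, root_vw.
  assert (root_a : (t | (u * w) ^ 3 + 1 * (u * w) + 1)) by now rewrite Z.mul_1_l.
  assert (root_b : (t | (v * w) ^ 3 + 1 * (v * w) + 1)) by now rewrite Z.mul_1_l.
  assert (Huvw : (t | u * v * w - 1)).
  { replace (u * v * w) with (u * w * v) by ring.
    rewrite Hchain; apply divide_chain_value_pred; assumption. }
  assert (Hdistinct : ~ (t | u * w - v * w)).
  { replace (u * w - v * w) with (w * (u - v)) by ring.
    apply (prime_abs_not_divide_mul _ Ht); [| assumption].
    exact (prime_abs_not_divide_unit_factor _ Ht _ _ Huvw). }
  pose proof (cubic_third_root t Ht 1 1 _ _ root_a root_b Hdistinct) as Hroot3.
  pose proof (cubic_product_roots t Ht 1 1 _ _ root_a root_b Hdistinct) as Hvieta.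
  pose proof (vieta_third_root_congr t Ht _ _ _ Huvw Hvieta) as Hthird.
  pose proof (cubic_root_congr t 1 1 _ _ Hthird Hroot3) as Hroot.
  cbv beta in Hroot; rewrite Z.mul_1_l in Hroot.
  assert (Hdiv : (- (u * v) | t ^ 3 + t ^ lam + 1)).
  { exists (- w); rewrite <- Hchain; ring. }
  assert (HS : satS lam 1 (- (u * v)) t) by (split; [| rewrite Z.pow_1_r]; assumption).
  split; [| split]; [exact HS | exact HS |].
  rewrite <- Hchain; ring.
Qed.
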